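(* Let $\mathbf{r},\mathbf{s}$ be two duplicate-free TP relations. The number of lineage-aware temporal windows produced by the window advancer, i.e., $|\mathbf{W}(\mathbf{r},\mathbf{s})|$, is at most $n_r+n_s-f_d$, where $n_r$ and $n_s$ are the numbers of interval start and end points in $\mathbf{r}$ and $\mathbf{s}$ respectively, and $f_d$ is the number of distinct facts occurring in $\mathbf{r}$ and $\mathbf{s}$.
   Context: A TP relation $\mathbf{r}$ is a finite set of tuples $r$ with fact $r.F$ (a tuple of ordinary attribute values), lineage $r.\lambda$ (for a base tuple, its own identifier), time interval $r.T=[T_s,T_e)$ over a finite ordered domain of time points, and probability $r.p\in(0,1]$; each tuple contributes one start point $T_s$ and one end point $T_e$. $\mathbf{r}$ is duplicate-free iff any two distinct tuples with the same fact have disjoint intervals. $\lambda^{\mathbf{r},f}_t$ is $r.\lambda$ if some $r\in\mathbf{r}$ has $r.F=f$ and $t\in r.T$, and $\mathtt{null}$ otherwise. The set $\mathbf{W}(\mathbf{r},\mathbf{s})$ of lineage-aware windows (which the window-advancer algorithm enumerates) consists of tuples $\tilde w=(F,T,\lambda_r,\lambda_s)$, $T$ an interval, $\lambda_r,\lambda_s$ lineage expressions or $\mathtt{null}$, such that for all $t\in\tilde w.T$: ($\lambda^{\mathbf{r},\tilde w.F}_t\neq\mathtt{null}$ or $\lambda^{\mathbf{s},\tilde w.F}_t\neq\mathtt{null}$) and $\tilde w.\lambda_r=\lambda^{\mathbf{r},\tilde w.F}_t$ and $\tilde w.\lambda_s=\lambda^{\mathbf{s},\tilde w.F}_t$; and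 for all $t'\notin\tilde w.T$: $\tilde w.\lambda_r\neq\lambda^{\mathbf{r},\tilde w.F}_{t'}$ or $\tilde w.\lambda_s\neq\lambda^{\mathbf{s},\tilde w.F}_{t'}$. *)

From HB Require Import structures.
From mathcomp Require Import all_boot all_order all_algebra.
Set Implicit Arguments. Unset Strict Implicit. Unset Printing Implicit Defensive.
Import Order.TTheory GRing.Theory Num.Theory.

(* Time points: natural numbers (a finite ordered domain embeds in nat).
   A TP tuple: fact, lineage (its own base identifier), interval [ts, te),
   probability. *)
Record tp_tuple (F Id : Type) (R : Type) := TPTuple {
  tp_fact : F;
  tp_lin  : Id;
  tp_ts   : nat;
  tp_te   : nat;
  tp_prob : R }.

Definition in_interval (a b t : nat) : bool := (a <= t) && (t < b).

Section TP.
Variables (F Id : eqType) (R : realFieldType).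
Local Notation tuple := (tp_tuple F Id R).

Definition tp_relation (r : seq tuple) : Prop :=
  (forall (x0 : tuple) (i : nat), (i < size r)%N ->
     [/\ (tp_ts (nth x0 r i) < tp_te (nth x0 r i))%N,
         (0 < tp_prob (nth x0 r i))%R & (tp_prob (nth x0 r i) <= 1)%R]) /\
  (forall (x0 : tuple) (i j : nat), (i < size r)%N -> (j < size r)%N -> i <> j ->
     tp_lin (nth x0 r i) <> tp_lin (nth x0 r j)).

Definition duplicate_free (r : seq tuple) : Prop :=
  forall (x0 : tuple) (i j : nat), (i < size r)%N -> (j < size r)%N -> i <> j ->
    tp_fact (nth x0 r i) = tp_fact (nth x0 r j) ->
    forall t, ~~ (in_interval (tp_ts (nth x0 r i)) (tp_te (nth x0 r i)) t &&
                  in_interval (tp_ts (nth x0 r j)) (tp_te (nth x0 r j)) t).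

(* lambda^{r,f}_t : the lineage of the tuple of r with fact f valid at t,
   or None (= null).  (Unique for duplicate-free r.) *)
Definition lam (r : seq tuple) (f : F) (t : nat) : option Id :=
  match [seq x <- r | (tp_fact x == f) && in_interval (tp_ts x) (tp_te x) t] with
  | x :: _ => Some (tp_lin x)
  | [::] => None
  end.

(* A lineage-aware window (F, [a,b), lambda_r, lambda_s). *)
Definition window := (F * nat * nat * option Id * option Id)%type.

Definition is_window (r s : seq tuple) (w : window) : Prop :=
  let: (f, a, b, lr, ls) := w in
  (a < b)%N /\
  (forall t, in_interval a b t ->
     [/\ (lam r f t != None) || (lam s f t != None),
         lr = lam r f t & ls = lam s f t]) /\
  (forall t', ~~ in_interval a b t' -> lr <> lam r f t' \/ ls <> lam s f t').

Definition n_points (r : seq tuple) : nat := 2 * size r.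

Definition n_facts (r s : seq tuple) : nat := size (undup (map (@tp_fact _ _ _) (r ++ s))).

End TP.

From HB Require Import structures.
From mathcomp Require Import all_boot all_order all_algebra.
From mathcomp Require Import zify.

(* A window (f, [a, b), lr, ls) is determined by its start (f, a): it is the longest interval
   from a on which the lineage pair stays (lr, ls). The start is an endpoint of a tuple with
   fact f, because either a = 0 and some tuple starts at 0, or the lineage pair changes between
   a - 1 and a, which can only happen at an endpoint. Moreover a lies strictly before the last
   end point of fact f, so these f_d last end points are endpoints that start no window. Hence
   |W| + f_d is at most the number n_r + n_s of endpoints. *)

Set Implicit Arguments.
Unset Strict Implicit.
Unset Printing Implicit Defensive.

Lemma eq_bigmax_seq (I : eqType) (r : seq I) (P : pred I) (F : I -> nat) :
  has P r -> exists2 i, i \in r & P i && (F i == \max_(j <- r | P j) F j).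
Proof.
elim: r => //= j r IH; rewrite big_cons.
have [Pj _ | nPj /IH [i ir Pi]] := boolP (P j); last first.
  by exists i; rewrite ?inE ?ir ?orbT.
have [/IH [i ir /andP[Pi /eqP <-]] | nPr] := boolP (has P r); last first.
  by exists j; rewrite ?mem_head // Pj big_hasC ?maxn0 ?eqxx.
have [_ | _] := leqP (F i) (F j).
  by exists j; rewrite ?mem_head // Pj eqxx.
by exists i; rewrite ?inE ?ir ?orbT // Pi eqxx.
Qed.

Definition tp_encode (F Id R : Type) (x : tp_tuple F Id R) :=
  (tp_fact x, tp_lin x, tp_ts x, tp_te x, tp_prob x).
Definition tp_decode (F Id R : Type) (p : F * Id * nat * nat * R) : tp_tuple F Id R :=
  let: (f, l, ts, te, pr) := p in TPTuple f l ts te pr.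
Lemma tp_encodeK (F Id R : Type) : cancel (@tp_encode F Id R) (@tp_decode F Id R).
Proof. by case. Qed.
HB.instance Definition _ (F Id R : eqType) :=
  Equality.copy (tp_tuple F Id R) (can_type (@tp_encodeK F Id R)).

Section Windows.
Variables (F Id : eqType) (R : realFieldType).
Local Notation tuple := (tp_tuple F Id R).

Definition endpoints (r : seq tuple) : seq (F * nat) :=
  flatten [seq [:: (tp_fact x, tp_ts x); (tp_fact x, tp_te x)] | x <- r].

Lemma size_endpoints (r : seq tuple) : size (endpoints r) = (2 * size r)%N.
Proof. by elim: r => //= x r ->; rewrite mulnS. Qed.

Lemma endpoints_cat (r s : seq tuple) : endpoints (r ++ s) = endpoints r ++ endpoints s.
Proof. by rewrite /endpoints map_cat flatten_cat. Qed.

Lemma mem_endpoints_ts (r : seq tuple) x : x \in r -> (tp_fact x, tp_ts x) \in endpoints r.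
Proof. by move=> xr; apply/flatten_mapP; exists x; rewrite ?inE ?eqxx. Qed.

Lemma mem_endpoints_te (r : seq tuple) x : x \in r -> (tp_fact x, tp_te x) \in endpoints r.
Proof. by move=> xr; apply/flatten_mapP; exists x; rewrite ?inE ?eqxx ?orbT. Qed.

Lemma lam_neq_None (r : seq tuple) f t :
  (lam r f t != None) = has (fun x => (tp_fact x == f) && in_interval (tp_ts x) (tp_te x) t) r.
Proof. by rewrite /lam has_filter; case: filter. Qed.

Lemma lam_cat_neq_None (r s : seq tuple) f t :
  (lam (r ++ s) f t != None) = (lam r f t != None) || (lam s f t != None).
Proof. by rewrite !lam_neq_None has_cat. Qed.

Lemma lam0_endpoint (r : seq tuple) f : lam r f 0 != None -> (f, 0) \in endpoints r.
Proof.
rewrite lam_neq_None => /hasP[x xr /andP[/eqP <- /andP[]]].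
by rewrite leqn0 => /eqP <- _; exact: mem_endpoints_ts xr.
Qed.

Lemma lam_succ_endpoint (r : seq tuple) f t : lam r f t != lam r f t.+1 -> (f, t.+1) \in endpoints r.
Proof.
apply: contraR => not_endpoint; apply/eqP; rewrite /lam.
congr (match _ with [::] => _ | _ :: _ => _ end).
apply: eq_in_filter => -[g l ts te p] xr /=.
have [gf | //] := eqVneq g f; subst g.
have ts_ne : ts != t.+1 by apply: contraNneq not_endpoint => <-; exact: mem_endpoints_ts xr.
have te_ne : te != t.+1 by apply: contraNneq not_endpoint => <-; exact: mem_endpoints_te xr.
rewrite /in_interval; apply/idP/idP => /andP[? ?]; apply/andP; split; lia.
Qed.

Definition last_end (L : seq tuple) (f : F) : nat := \max_(x <- L | tp_fact x == f) tp_te x.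

Lemma lam_lt_last_end (L : seq tuple) f t : lam L f t != None -> t < last_end L f.
Proof.
rewrite lam_neq_None => /hasP[x xL /andP[/eqP fx /andP[_ t_lt]]].
by apply: leq_trans t_lt _; apply: leq_bigmax_seq; rewrite ?fx.
Qed.

Lemma last_end_endpoint (L : seq tuple) f :
  f \in map (@tp_fact _ _ _) L -> (f, last_end L f) \in endpoints L.
Proof.
move=> /mapP[y yL ->]; rewrite /last_end.
have has_fy : has (fun x => tp_fact x == tp_fact y) L by apply/hasP; exists y.
have [x xL /andP[/eqP fx /eqP <-]] := eq_bigmax_seq (@tp_te _ _ _) has_fy.
by rewrite -fx; exact: mem_endpoints_te xL.
Qed.

Definition last_ends (L : seq tuple) : seq (F * nat) :=
  [seq (f, last_end L f) | f <- undup (map (@tp_fact _ _ _) L)].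

Lemma uniq_last_ends (L : seq tuple) : uniq (last_ends L).
Proof. by rewrite map_inj_uniq ?undup_uniq // => f g []. Qed.

Lemma last_ends_sub_endpoints (L : seq tuple) : {subset last_ends L <= endpoints L}.
Proof. by move=> p /mapP[f]; rewrite mem_undup => /last_end_endpoint ? ->. Qed.

Definition window_start (w : window F Id) : F * nat := let: (f, a, _, _, _) := w in (f, a).

Section WindowStarts.
Variables r s : seq tuple.

Lemma window_at_start f a b lr ls : is_window r s (f, a, b, lr, ls) ->
  [/\ (lam r f a != None) || (lam s f a != None), lr = lam r f a & ls = lam s f a].
Proof. by case=> ab [inside _]; apply: inside; rewrite /in_interval leqnn. Qed.

Lemma window_end_le f a b b' lr ls :
  is_window r s (f, a, b, lr, ls) -> is_window r s (f, a, b', lr, ls) -> b' <= b.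
Proof.
move=> [ab [_ outside]] [_ [inside' _]]; rewrite leqNgt; apply/negP => b_lt.
have b_out : ~~ in_interval a b b by rewrite /in_interval ltnn andbF.
have b_in' : in_interval a b' b by rewrite /in_interval b_lt (ltnW ab).
have [_ elr els] := inside' b b_in'.
by case: (outside b b_out); rewrite -?elr -?els.
Qed.

Lemma window_start_inj w1 w2 :
  is_window r s w1 -> is_window r s w2 -> window_start w1 = window_start w2 -> w1 = w2.
Proof.
case: w1 w2 => [[[[f a] b1] lr1] ls1] [[[[f2 a2] b2] lr2] ls2] w1 w2 [ff2 aa2].
subst f2 a2; have [_ e1 e2] := window_at_start w1; have [_ e3 e4] := window_at_start w2.
subst lr1 ls1 lr2 ls2.
by have -> : b1 = b2 by apply/anti_leq; rewrite (window_end_le w1 w2) (window_end_le w2 w1).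
Qed.

Lemma window_start_endpoint w : is_window r s w -> window_start w \in endpoints (r ++ s).
Proof.
case: w => [[[[f a] b] lr] ls] w /=; have [active elr els] := window_at_start w.
case: a => [|a] in w active elr els *.
  by apply: lam0_endpoint; rewrite lam_cat_neq_None.
have a_out : ~~ in_interval a.+1 b a by rewrite /in_interval ltnn.
case: w => _ [_ outside]; rewrite endpoints_cat mem_cat.
case: (outside a a_out) => changed; apply/orP; [left | right]; apply: lam_succ_endpoint.
  by rewrite -elr eq_sym; apply/eqP.
by rewrite -els eq_sym; apply/eqP.
Qed.

Lemma window_start_notin_last_ends w :
  is_window r s w -> window_start w \notin last_ends (r ++ s).
Proof.
case: w => [[[[f a] b] lr] ls] w /=; have [active _ _] := window_at_start w.
have a_lt : a < last_end (r ++ s) f by apply: lam_lt_last_end; rewrite lam_cat_neq_None.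
by apply/mapP => -[g _ [fg a_eq]]; rewrite a_eq -fg ltnn in a_lt.
Qed.

End WindowStarts.
End Windows.

Arguments window_start {F Id} w.

Theorem proposition1 (F Id : eqType) (R : realFieldType)
    (r s : seq (tp_tuple F Id R)) :
  tp_relation r -> tp_relation s ->
  duplicate_free r -> duplicate_free s ->
  forall ws : seq (window F Id),
    uniq ws -> (forall w, w \in ws -> is_window r s w) ->
    (size ws <= n_points r + n_points s - n_facts r s)%N.
Proof.
move=> _ _ _ _ ws uniq_ws windows.
have uniq_starts : uniq (map window_start ws).
  rewrite map_inj_in_uniq // => w1 w2 /windows w1W /windows w2W.
  exact: window_start_inj w1W w2W.
have uniq_points : uniq (map window_start ws ++ last_ends (r ++ s)).
  rewrite cat_uniq uniq_starts uniq_last_ends andbT /=.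
  apply/hasPn => p p_last; apply/mapP => -[w /windows wW p_eq].
  by move: (window_start_notin_last_ends wW); rewrite -p_eq p_last.
have sub_points : {subset map window_start ws ++ last_ends (r ++ s) <= endpoints (r ++ s)}.
  move=> p; rewrite mem_cat => /orP[/mapP[w /windows wW ->] | ].
    exact: window_start_endpoint.
  exact: last_ends_sub_endpoints.
have := uniq_leq_size uniq_points sub_points.
by rewrite size_cat !size_map size_endpoints size_cat /n_points /n_facts; lia.
Qed.
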